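(* Let $\kappa<\Gamma$ be infinite cardinals. Then the Banach space $X^{\kappa,\Gamma}$ fails the ball fixed point property.
   Context: Cardinals are identified with initial ordinals, and an ordinal is the set of smaller ordinals. $\ell_\infty(\Gamma)$ is the Banach space of bounded functions $f\colon\Gamma\to\mathbb{R}$ with $\|f\|_\infty=\sup_{\gamma\in\Gamma}|f(\gamma)|$. $[\Gamma]^\kappa$ is the family of subsets of $\Gamma$ of cardinality $\kappa$. Define $X^{\kappa,\Gamma}=\{f\in\ell_\infty(\Gamma):\exists A\in[\Gamma]^\kappa \text{ such that } f|_{\Gamma\setminus A}\text{ is constant}\}$, a closed linear subspace of $\ell_\infty(\Gamma)$ with the sup norm. A real Banach space $X$ has the ball fixed point property (BFPP) if every nonexpansive map $T\colon B_X\to B_X$ (i.e. $\|Tx-Ty\|\le\|x-y\|$) has a fixed point, where $B_X$ is the closed unit ball. *)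

From HB Require Import structures.
From mathcomp Require Import all_boot all_order all_algebra.
From mathcomp Require Import all_classical all_reals.

Import Order.TTheory GRing.Theory Num.Theory.
Local Open Scope classical_set_scope.
Local Open Scope ring_scope.
Local Open Scope card_scope.

(* Cardinals are modelled by types: Gamma is (a type of cardinality) Γ,
   kappa a type of cardinality κ.  Only cardinalities matter. *)

Definition bounded_fun (R : realType) (G : Type) (f : G -> R) : Prop :=
  exists M : R, forall g, `|f g| <= M.

Definition supnorm (R : realType) (G : Type) (f : G -> R) : R :=
  sup (range (fun g => `|f g|)).

Definition Xspace (R : realType) (K G : Type) (f : G -> R) : Prop :=
  bounded_fun R G f /\
  exists A : set G, A #= [set: K] /\
    exists c : R, forall g, ~ A g -> f g = c.

Definition unit_ball (R : realType) (K G : Type) (f : G -> R) : Prop :=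
  Xspace R K G f /\ supnorm R G f <= 1.

Definition has_BFPP (R : realType) (K G : Type) : Prop :=
  forall T : (G -> R) -> (G -> R),
    (forall x, unit_ball R K G x -> unit_ball R K G (T x)) ->
    (forall x y, unit_ball R K G x -> unit_ball R K G y ->
       supnorm R G (T x \- T y) <= supnorm R G (x \- y)) ->
    exists x, unit_ball R K G x /\ T x = x.

From HB Require Import structures.
From mathcomp Require Import all_boot all_order all_algebra.
From mathcomp Require Import all_classical all_reals.
From mathcomp Require Import wochoice lra.
Import Order.TTheory GRing.Theory Num.Theory.
Local Open Scope classical_set_scope.
Local Open Scope card_scope.

(* Well-order Γ with least element m0 and set T f m0 = 1 and
   T f g = - limsup_{a -> g^-} f a for g > m0.  T is 1-Lipschitz for the sup
   norm and maps the unit ball into itself: if f is the constant c off a set A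
   with |A| = κ, then T f is the constant -c off A together with the points g
   below which A is cofinal, and there are at most κ + κ = κ of those.
   A fixed point of T takes only the values ±1 (transfinite induction), yet at
   any point outside that set, which exists because κ < Γ, it would equal both
   c and -c. *)


Lemma card_le_inj {T U : Type} {A : set T} {B : set U} (f : T -> U) :
  {in A &, injective f} -> f @` A `<=` B -> A #<= B.
Proof.
move=> finj fAB; apply: card_le_trans (subset_card_le fAB).
by rewrite -(card_le_eql (inj_card_eq finj)).
Qed.

Lemma card_le_injfun {T U : Type} (u : U) {A : set T} {B : set U} :
  A #<= B -> exists2 f : T -> U, f @` A `<=` B & {in A &, injective f}.
Proof.
elim/Ppointed: U u B => [U u|U _] B; first by case: (no u).
by move/pcard_leP => /injfunPex [f fAB finj]; exists f => // _ [x Ax <-]; apply: fAB.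
Qed.

Lemma card_le_subsingleton {T U : Type} (u : U) {A : set T} {B : set U} :
  B u -> (forall x y, A x -> A y -> x = y) -> A #<= B.
Proof.
move=> Bu Asub; apply: (card_le_inj (fun=> u)) => [x y Ax Ay _|_ [x _ <-] //].
by apply: Asub; rewrite -in_setE.
Qed.

Lemma double_add_bool_inj (m n : nat) (b c : bool) : (b + m.*2 = c + n.*2)%N -> b = c /\ m = n.
Proof.
move=> e; split; last by rewrite -(half_bit_double m b) e half_bit_double.
by have := congr1 odd e; rewrite !oddD !oddb !odd_double !addbF.
Qed.

(* κ + κ = κ, by Zorn: a maximal partial doubling (an injection of S × bool into S,
   for S ⊆ K) has a finite complement, which is then absorbed into a countable
   subset of S. *)
Section Doubling.
Variable K : Type.

Record doubling := Doubling {
  ddom : set K;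
  dmap : K * bool -> K;
  dmap_inj : forall p q, ddom p.1 -> ddom q.1 -> dmap p = dmap q -> p = q;
  dmap_into : forall p, ddom p.1 -> ddom (dmap p) }.
Arguments Doubling {ddom dmap}.

Definition extends (s t : doubling) : bool :=
  `[< ddom s `<=` ddom t /\ forall p, ddom s p.1 -> dmap t p = dmap s p >].

Lemma extends_refl s : extends s s.
Proof. by apply/asboolP; split. Qed.

Lemma extends_trans r s t : extends r s -> extends s t -> extends r t.
Proof.
move=> /asboolP[rs rsE] /asboolP[st stE]; apply/asboolP; split=> [x /rs/st //|p rp].
by rewrite stE ?rsE //; apply: rs.
Qed.

Section ChainUnion.
Variable C : set doubling.
Hypothesis C_total : total_on C extends.

Let in_chain x := exists2 s, C s & ddom s x.

Definition chain_map (p : K * bool) : K :=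
  if pselect (in_chain p.1) is left e then dmap (s2val (cid2 e)) p else p.1.

Lemma chain_mapE s p : C s -> ddom s p.1 -> chain_map p = dmap s p.
Proof.
move=> Cs sp; rewrite /chain_map; case: pselect => [e|]; last by case; exists s.
case: (cid2 e) => s' Cs' s'p /=.
by case: (C_total _ _ Cs Cs') => /asboolP[_ ->].
Qed.
Arguments chain_mapE {s p}.

Lemma chain_map_inj p q : in_chain p.1 -> in_chain q.1 -> chain_map p = chain_map q -> p = q.
Proof.
move=> [s Cs sp] [t Ct tq].
have [/asboolP[st _]|/asboolP[ts _]] := C_total _ _ Cs Ct.
  by rewrite (chain_mapE Ct (st _ sp)) (chain_mapE Ct tq); apply: dmap_inj => //; apply: st.
by rewrite (chain_mapE Cs sp) (chain_mapE Cs (ts _ tq)); apply: dmap_inj => //; apply: ts.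
Qed.

Lemma chain_map_into p : in_chain p.1 -> in_chain (chain_map p).
Proof. by move=> [s Cs sp]; exists s; rewrite // (chain_mapE Cs sp); apply: dmap_into. Qed.

Definition chain_doubling := Doubling chain_map_inj chain_map_into.

Lemma chain_doubling_ub s : C s -> extends s chain_doubling.
Proof.
move=> Cs; apply/asboolP; split=> [x sx|p sp]; first by exists s.
exact: chain_mapE.
Qed.

End ChainUnion.

Lemma maximal_doubling_cofinite (t : doubling) :
  (forall s, extends t s -> extends s t) -> finite_set (~` ddom t).
Proof.
move=> tmax; apply: contrapT => /[dup] /infinite_setN0 [k _] /infiniteP.
move=> /(card_le_injfun k) [e eout einj].
have [inv invK] : exists inv : K -> nat, forall n, inv (e n) = n.
  have /choice [inv invP] : forall y, exists n, (exists m, e m = y) -> e n = y.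
    move=> y; have [[m <-]|ny] := pselect (exists m, e m = y); first by exists m.
    by exists 0%N.
  by exists inv => n; apply: einj; rewrite ?in_setE // invP //; exists n.
pose S := ddom t `|` range e.
pose g p := if pselect (ddom t p.1) then dmap t p else e (p.2 + (inv p.1).*2)%N.
have eS n : ~ ddom t (e n) by apply: eout; exists n.
have g_inj p q : S p.1 -> S q.1 -> g p = g q -> p = q.
  rewrite /g; move: p q => [x b] [y c] /= Sx Sy.
  case: pselect => tx; case: pselect => ty /=.
  - exact: dmap_inj.
  - by move=> E; case: (eS (c + (inv y).*2)%N); rewrite -E; apply: dmap_into.
  - by move=> E; case: (eS (b + (inv x).*2)%N); rewrite E; apply: dmap_into.
  case: Sx => // -[n _ <-]; case: Sy => // -[m _ <-]; rewrite !invK.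
  by move=> /einj /[!in_setE] /(_ I I) /double_add_bool_inj [-> ->].
have g_into p : S p.1 -> S (g p).
  rewrite /g; case: pselect => tp Sp; first by left; apply: dmap_into.
  by right; exists (p.2 + (inv p.1).*2)%N.
have /tmax /asboolP[St _] : extends t (Doubling g_inj g_into).
  by apply/asboolP; split=> [x tx|p tp]; [left | rewrite /= /g; case: pselect].
by apply: (eS 0%N); apply: St; right; exists 0%N.
Qed.

End Doubling.
Arguments ddom {K}.
Arguments dmap {K}.
Arguments chain_doubling {K C}.

Lemma infinite_prod_bool_inj {K : Type} :
  infinite_set [set: K] -> exists h : K * bool -> K, injective h.
Proof.
move=> Kinf; have [k _] := infinite_setN0 Kinf.
have triv_inj (p q : K * bool) : set0 p.1 -> set0 q.1 -> p.1 = q.1 -> p = q by [].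
have triv_into (p : K * bool) : set0 p.1 -> set0 p.1 by [].
have [||t tmax] := ZL_preorder (@Doubling K _ _ triv_inj triv_into) (@extends_refl K).
- exact: extends_trans.
- by move=> C Ctot; exists (chain_doubling Ctot) => s; apply: chain_doubling_ub.
set S := ddom t; set d := dmap t.
have coS_fin : finite_set (~` S) by apply: maximal_doubling_cofinite.
have S_inf : infinite_set S.
  by move=> S_fin; apply: Kinf; rewrite -(setUv S) finite_setU.
have [e eS einj] := card_le_injfun k ((infiniteP S).1 S_inf).
have [phi _ phi_inj] := card_le_injfun 0%N (finite_set_countable coS_fin).
have dS p : S p.1 -> S (d p) by apply: dmap_into.
have eS' n : S (e n) by apply: eS; exists n.
have d_inj x y b c : S x -> S y -> d (x, b) = d (y, c) -> x = y /\ b = c.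
  by move=> Sx Sy /(@dmap_inj _ t (x, b) (y, c) Sx Sy) [-> ->].
exists (fun p => if pselect (S p.1) then d (d p, false) else d (e (p.2 + (phi p.1).*2)%N, true)).
move=> [x b] [y c] /=; case: pselect => Sx; case: pselect => Sy /=.
- by move=> /(d_inj _ _ _ _ (dS (x, b) Sx) (dS (y, c) Sy)) [] /(d_inj _ _ _ _ Sx Sy) [-> ->].
- by move=> /(d_inj _ _ _ _ (dS (x, b) Sx) (eS' _)) [].
- by move=> /(d_inj _ _ _ _ (eS' _) (dS (y, c) Sy)) [].
move=> /(d_inj _ _ _ _ (eS' _) (eS' _)) [] /einj /[!in_setE] /(_ I I).
by move=> /double_add_bool_inj [-> /phi_inj] -> //; rewrite in_setE.
Qed.

Lemma card_setU_le (T K : Type) (A B : set T) : infinite_set [set: K] ->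
  A #<= [set: K] -> B #<= [set: K] -> A `|` B #<= [set: K].
Proof.
move=> Kinf; have [k _] := infinite_setN0 Kinf; have [h h_inj] := infinite_prod_bool_inj Kinf.
move=> /(card_le_injfun k) [f _ f_inj] /(card_le_injfun k) [g _ g_inj].
apply: (card_le_inj (fun x => if pselect (A x) then h (f x, false) else h (g x, true))) => //.
move=> x y /[!in_setE] Ax Ay; case: pselect => Ax'; case: pselect => Ay' /h_inj [] //.
- by move/f_inj; apply; rewrite in_setE.
- by move/g_inj; apply; rewrite in_setE; [case: Ax | case: Ay].
Qed.

Lemma exists_well_order (T : Type) : exists le : T -> T -> Prop,
  [/\ forall x, le x x, forall x y z, le x y -> le y z -> le x z,
      forall x y, le x y -> le y x -> x = y, forall x y, le x y \/ le y x &
      forall P : set T, P !=set0 -> exists2 z, P z & forall x, P x -> le z x].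
Proof.
have [R Rwo] := well_ordering_principle {classic T}.
have Rch : wo_chain R predT by apply: withinW.
have Rtot := wo_chainW Rch.
have Rrefl := wo_chain_reflexive Rch.
have Ranti := wo_chain_antisymmetric Rch.
have Rmin (P : set T) : P !=set0 -> exists2 z, P z & forall x, P x -> R z x.
  move=> [x Px]; have [|z [[Pz zmin] _]] := Rwo [pred x | `[< P x >]].
    by exists x; rewrite inE.
  by exists z => [|y Py]; [move: Pz; rewrite inE | apply: zmin; rewrite inE].
exists R; split => // [x|x y z Rxy Ryz|x y Rxy Ryx|x y].
- exact: Rrefl.
- have [|m Pm mmin] := Rmin [set w | w = x \/ w = y \/ w = z]; first by exists x; left.
  case: Pm mmin => [->|[->|->]] mmin.
  + by apply: mmin; right; right.
  + by rewrite (Ranti x y) //; apply/andP; split => //; apply: mmin; left.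
  + by rewrite -(Ranti y z) //; apply/andP; split => //; apply: mmin; right; left.
- by apply: Ranti => //; apply/andP.
- by apply/orP; apply: Rtot.
Qed.

Local Open Scope ring_scope.

Section SupImage.
Variable R : realType.

Lemma sup_eq_max (E : set R) (x : R) : E x -> ubound E x -> sup E = x.
Proof.
move=> Ex Ex_ub; apply/eqP; rewrite eq_le ge_sup //=; last by exists x.
by apply: ub_le_sup => //; exists x.
Qed.

Lemma has_ubound_image_norm (T : Type) (I : set T) (u : T -> R) (M : R) :
  (forall i, I i -> `|u i| <= M) -> has_ubound (u @` I).
Proof. by move=> uM; exists M => _ [i Ii <-]; have /ler_normlP[] := uM i Ii. Qed.

Lemma norm_sup_le (E : set R) (M : R) :
  E !=set0 -> (forall x, E x -> `|x| <= M) -> `|sup E| <= M.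
Proof.
move=> [x Ex] EM; have EMub : ubound E M by move=> y /EM /ler_normlP[].
rewrite ler_norml ge_sup ?andbT //; last by exists x.
apply: le_trans (ub_le_sup _ Ex); last by exists M.
by have /ler_normlP[] := EM x Ex; rewrite lerNl.
Qed.

Lemma sup_image_le_add (T : Type) (I : set T) (u v : T -> R) (d : R) :
  I !=set0 -> has_ubound (v @` I) -> (forall i, I i -> u i <= v i + d) ->
  sup (u @` I) <= sup (v @` I) + d.
Proof.
move=> [i0 Ii0] vub uv; apply: ge_sup => [|_ [i Ii <-]]; first by exists (u i0), i0.
by apply: le_trans (uv i Ii) _; rewrite lerD2r; apply: ub_le_sup => //; exists i.
Qed.

Lemma dist_sup_image_le (T : Type) (I : set T) (u v : T -> R) (d : R) :
  I !=set0 -> has_ubound (u @` I) -> has_ubound (v @` I) ->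
  (forall i, I i -> `|u i - v i| <= d) -> `|sup (u @` I) - sup (v @` I)| <= d.
Proof.
move=> I0 uub vub uvd; rewrite ler_distl; apply/andP; split.
  rewrite lerBlDr; apply: sup_image_le_add => // i /uvd; rewrite distrC => /ler_distlDr.
  by rewrite addrC.
by apply: sup_image_le_add => // i /uvd; rewrite ler_distl => /andP[_].
Qed.

Lemma sup_image_two_valued (T : Type) (I : set T) (u : T -> R) (x y : R) :
  I !=set0 -> x <= y -> (forall i, I i -> u i = x \/ u i = y) ->
  sup (u @` I) = x \/ sup (u @` I) = y.
Proof.
move=> [i0 Ii0] xy uxy; have [[i Ii uiy]|noy] := pselect (exists2 i, I i & u i = y).
  by right; apply: sup_eq_max => [|_ [j Ij <-]]; [exists i | case: (uxy _ Ij) => ->].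
left; apply: sup_eq_max => [|_ [j Ij <-]].
  by exists i0 => //; case: (uxy _ Ii0) => // uy; case: noy; exists i0.
by case: (uxy _ Ij) => [->|uy] //; case: noy; exists j.
Qed.

End SupImage.

Lemma supnorm_ge (R : realType) (G : Type) (h : G -> R) (M : R) :
  (forall g, `|h g| <= M) -> forall g, `|h g| <= supnorm R G h.
Proof.
move=> hM g; apply: ub_le_sup; last by exists g.
by exists M => _ [a _ <-].
Qed.

Lemma supnorm_le {R : realType} {G : Type} (g0 : G) {h : G -> R} {d : R} :
  (forall g, `|h g| <= d) -> supnorm R G h <= d.
Proof. by move=> hd; apply: ge_sup => [|_ [a _ <-]]; first by exists `|h g0|, g0. Qed.

Lemma unit_ball_norm_le1 (R : realType) (K G : Type) (f : G -> R) :
  unit_ball R K G f -> forall g, `|f g| <= 1.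
Proof. by move=> [[[M fM] _] f1] g; apply: le_trans f1; apply: supnorm_ge fM g. Qed.

Section FlipLimsup.
Variables (R : realType) (G : Type) (le : G -> G -> Prop) (m0 : G).
Hypothesis le_reflexive : forall x, le x x.
Hypothesis le_transitive : forall x y z, le x y -> le y z -> le x z.
Hypothesis le_antisymmetric : forall x y, le x y -> le y x -> x = y.
Hypothesis le_totality : forall x y, le x y \/ le y x.
Hypothesis le_wellfounded :
  forall P : set G, P !=set0 -> exists2 z, P z & forall x, P x -> le z x.
Hypothesis m0_le : forall x, le m0 x.

Definition lt x y := le x y /\ x <> y.

Lemma lt_ind (P : G -> Prop) :
  (forall g, (forall a, lt a g -> P a) -> P g) -> forall g, P g.
Proof.
move=> IH g; apply: contrapT => nPg.
have [|z nPz zmin] := le_wellfounded [set g | ~ P g]; first by exists g.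
apply/nPz/IH => a [az naz]; apply: contrapT => nPa.
by apply: naz; apply: le_antisymmetric => //; apply: zmin.
Qed.

Definition seg_sup (f : G -> R) b g := sup [set f a | a in [set a | le b a /\ lt a g]].

Definition neg_limsup (f : G -> R) g := sup [set - seg_sup f b g | b in [set b | lt b g]].

Definition flip_limsup (f : G -> R) g := if pselect (g = m0) then 1 else neg_limsup f g.

Lemma m0_lt g : g <> m0 -> lt m0 g.
Proof. by move=> gm0; split => // /esym. Qed.

Section UnitBounded.
Variable f : G -> R.
Hypothesis f_le1 : forall a, `|f a| <= 1.

Lemma seg_sup_le1 b g : lt b g -> `|seg_sup f b g| <= 1.
Proof. by move=> bg; apply: norm_sup_le => [|_ [a _ <-] //]; exists (f b), b. Qed.

Lemma neg_limsup_le1 g : g <> m0 -> `|neg_limsup f g| <= 1.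
Proof.
move=> gm0; apply: norm_sup_le => [|_ [b bg <-]]; last by rewrite normrN seg_sup_le1.
by exists (- seg_sup f m0 g), m0 => //; apply: m0_lt.
Qed.

Lemma flip_limsup_le1 g : `|flip_limsup f g| <= 1.
Proof. by rewrite /flip_limsup; case: pselect => gm0; [rewrite normr1 | apply: neg_limsup_le1]. Qed.

Lemma neg_limsup_eventually_const g b0 c : lt b0 g ->
  (forall a, le b0 a -> lt a g -> f a = c) -> neg_limsup f g = - c.
Proof.
move=> b0g fc; have seg_c : seg_sup f b0 g = c.
  apply: sup_eq_max => [|_ [a [b0a ag] <-]]; last by rewrite fc.
  by exists b0; [split | apply: fc].
apply: sup_eq_max => [|_ [b bg <-]]; first by exists b0; rewrite ?seg_c.
rewrite lerN2; have [m [bm b0m mg]] : exists m, [/\ le b m, le b0 m & lt m g].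
  have [bb0|b0b] := le_totality b b0; first by exists b0.
  by exists b.
rewrite -(fc m b0m mg); apply: ub_le_sup; last by exists m.
by apply: has_ubound_image_norm => a _; apply: f_le1.
Qed.

End UnitBounded.
Arguments flip_limsup_le1 {f} f_le1 g.
Arguments neg_limsup_eventually_const {f} f_le1 {g b0 c}.

Lemma flip_limsup_dist_le (f h : G -> R) (d : R) :
  (forall a, `|f a| <= 1) -> (forall a, `|h a| <= 1) -> (forall a, `|f a - h a| <= d) ->
  forall g, `|flip_limsup f g - flip_limsup h g| <= d.
Proof.
move=> f1 h1 fhd g; rewrite /flip_limsup; case: pselect => gm0.
  by rewrite subrr normr0 (le_trans _ (fhd m0)).
have bnd u : (forall a, `|u a| <= 1) -> forall b, lt b g -> `|- seg_sup u b g| <= 1.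
  by move=> u1 b bg; rewrite normrN seg_sup_le1.
apply: dist_sup_image_le; first by exists m0; apply: m0_lt.
- exact: has_ubound_image_norm (bnd _ f1).
- exact: has_ubound_image_norm (bnd _ h1).
move=> b bg; rewrite -opprD normrN.
apply: dist_sup_image_le => [|||a _ //]; first by exists b.
- by apply: has_ubound_image_norm => a _; apply: f1.
- by apply: has_ubound_image_norm => a _; apply: h1.
Qed.

Lemma flip_limsup_fixed_pm1 (f : G -> R) :
  flip_limsup f = f -> forall g, f g = -1 \/ f g = 1.
Proof.
move=> ff; apply: lt_ind => g IH; rewrite -ff /flip_limsup.
case: pselect => gm0; first by right.
apply: sup_image_two_valued; first by exists m0; apply: m0_lt.
  lra.
move=> b bg; suff : seg_sup f b g = -1 \/ seg_sup f b g = 1.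
  by case=> ->; [right; rewrite opprK | left].
apply: sup_image_two_valued => [||a [_ ag]]; [by exists b | lra | exact: IH].
Qed.

Lemma lt_trichotomy x y : [\/ x = y, lt x y | lt y x].
Proof.
have [->|nxy] := pselect (x = y); first exact: Or31.
by case: (le_totality x y) => [xy|yx]; [apply: Or32 | apply: Or33; split => // /esym].
Qed.

Definition left_limits (A : set G) :=
  [set g | forall b, lt b g -> exists2 a, A a & le b a /\ lt a g].

Lemma bounded_left_limits_card_le (A : set G) :
  [set g | left_limits A g /\ exists2 a, A a & le g a] #<= A.
Proof.
have /choice [psi psiP] : forall g, exists p, (exists2 a, A a & le g a) ->
    [/\ A p, le g p & forall a, A a -> le g a -> le p a].
  move=> g; have [ex|] := pselect (exists2 a, A a & le g a); last by exists g.
  have [|p [Ap gp] pmin] := le_wellfounded [set a | A a /\ le g a].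
    by case: ex => a; exists a.
  by exists p => _; split => // a Aa ga; apply: pmin.
have psi_sep x y : left_limits A y -> (exists2 a, A a & le x a) ->
    (exists2 a, A a & le y a) -> lt x y -> psi x <> psi y.
  move=> ly /psiP [_ _ xmin] /psiP [_ ypy _] /ly [a Aa [xa [ay nay]]] psixy.
  apply: nay; apply: le_antisymmetric => //.
  by apply: le_transitive ypy _; rewrite -psixy; apply: xmin.
apply: (card_le_inj psi) => [x y|_ [x [_ /psiP [Apx _ _]] <-] //].
rewrite !in_setE => -[lx bx] [ly by_] psixy.
have [//|xy|yx] := lt_trichotomy x y; first by case: (psi_sep x y ly bx by_ xy).
by case: (psi_sep y x lx by_ bx yx).
Qed.

Lemma unbounded_left_limits_subsingleton (A : set G) x y :
  left_limits A x -> (forall a, A a -> ~ le x a) ->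
  left_limits A y -> (forall a, A a -> ~ le y a) -> x = y.
Proof.
move=> lx ubx ly uby; have [//|/ly [a Aa [xa _]]|/lx [a Aa [ya _]]] := lt_trichotomy x y.
  by case: (ubx a Aa xa).
by case: (uby a Aa ya).
Qed.

Lemma left_limits_card_le (K : Type) (A : set G) : infinite_set [set: K] ->
  A #<= [set: K] -> left_limits A #<= [set: K].
Proof.
move=> Kinf AK; have [k _] := infinite_setN0 Kinf.
pose bounded g := exists2 a, A a & le g a.
have split_bounded : left_limits A `<=` [set g | left_limits A g /\ bounded g] `|`
    [set g | left_limits A g /\ forall a, A a -> ~ le g a].
  move=> g lg; have [bg|ubg] := pselect (bounded g); [left | right] => //.
  by split => // a Aa ga; apply: ubg; exists a.
apply: card_le_trans (subset_card_le split_bounded) _; apply: card_setU_le => //.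
  exact: card_le_trans (bounded_left_limits_card_le A) AK.
apply: (card_le_subsingleton k) => // x y [lx ubx] [ly uby].
exact: (unbounded_left_limits_subsingleton _ _ _ lx ubx ly uby).
Qed.

Lemma flip_limsup_off_left_limits (f : G -> R) (A : set G) c :
  (forall a, `|f a| <= 1) -> (forall g, ~ A g -> f g = c) ->
  forall g, ~ left_limits A g -> flip_limsup f g = - c.
Proof.
move=> f1 fc g ng.
have [b bg noA] : exists2 b, lt b g & forall a, A a -> ~ (le b a /\ lt a g).
  apply: contrapT => nb; apply: ng => b bg; apply: contrapT => na.
  by apply: nb; exists b => // a Aa ?; apply: na; exists a.
rewrite /flip_limsup; case: pselect => gm0.
  by exfalso; move: bg; rewrite gm0 => -[bm0 []]; apply: le_antisymmetric.
apply: (neg_limsup_eventually_const f1 bg) => a ba ag; apply: fc => Aa.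
exact: noA a Aa (conj ba ag).
Qed.

Section AboveKappa.
Variable K : Type.
Hypothesis K_inf : infinite_set [set: K].

Lemma flip_limsup_support {f : G -> R} {A : set G} {c : R} :
  (forall a, `|f a| <= 1) -> A #= [set: K] -> (forall g, ~ A g -> f g = c) ->
  exists A' : set G, [/\ A' #= [set: K], A `<=` A' &
    forall g, ~ A' g -> f g = c /\ flip_limsup f g = - c].
Proof.
move=> f1 /card_eqPle [AK KA] fc; exists (A `|` left_limits A); split.
- apply: Cantor_Bernstein.
    by apply: card_setU_le => //; apply: left_limits_card_le.
  exact: card_le_trans KA (subset_card_le (@subsetUl _ A _)).
- by move=> x; left.
move=> g /not_orP [nAg nlg]; split; first exact: fc.
exact: flip_limsup_off_left_limits f1 fc g nlg.
Qed.

Lemma flip_limsup_unit_ball f : unit_ball R K G f -> unit_ball R K G (flip_limsup f).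
Proof.
move=> /[dup] /unit_ball_norm_le1 f1 [[_ [A [AK [c fc]]]] _].
have [A' [A'K _ off]] := flip_limsup_support f1 AK fc.
split; last by apply: (supnorm_le m0); apply: flip_limsup_le1 f1.
split; first by exists 1; apply: flip_limsup_le1 f1.
by exists A'; split => //; exists (- c) => g /off [].
Qed.

Lemma flip_limsup_nonexpansive f h : unit_ball R K G f -> unit_ball R K G h ->
  supnorm R G (flip_limsup f \- flip_limsup h) <= supnorm R G (f \- h).
Proof.
move=> /unit_ball_norm_le1 f1 /unit_ball_norm_le1 h1.
apply: (supnorm_le m0) => g; apply: flip_limsup_dist_le => // a.
apply: (@supnorm_ge _ _ (f \- h) 2) => b /=.
by have := ler_normB (f b) (h b); have := f1 b; have := h1 b; lra.
Qed.

Hypothesis G_gt_K : ~ ([set: G] #<= [set: K]).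

Lemma flip_limsup_no_fixed_point f : unit_ball R K G f -> flip_limsup f <> f.
Proof.
move=> /[dup] /unit_ball_norm_le1 f1 [[_ [A [AK [c fc]]]] _] ff.
have [A' [/card_eqPle [A'K _] _ off]] := flip_limsup_support f1 AK fc.
have [g nA'g] : exists g, ~ A' g.
  apply: contrapT => nex; apply/G_gt_K/(card_le_trans _ A'K)/subset_card_le.
  by move=> g _; apply: contrapT => nA'g; apply: nex; exists g.
have [fg flipg] := off g nA'g; have cN : c = - c by rewrite -{1}fg -ff.
by case: (flip_limsup_fixed_pm1 _ ff g); rewrite fg; lra.
Qed.

Theorem flip_limsup_not_BFPP : ~ has_BFPP R K G.
Proof.
move=> BFPP; have [f [f_ball ff]] := BFPP _ flip_limsup_unit_ball flip_limsup_nonexpansive.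
exact: flip_limsup_no_fixed_point f_ball ff.
Qed.

End AboveKappa.

End FlipLimsup.

Theorem mainTheorem6 (R : realType) (K G : Type)
  (hK : infinite_set [set: K])
  (hKG : [set: K] #<= [set: G])
  (hGK : ~ ([set: G] #<= [set: K])) :
  ~ has_BFPP R K G.
Proof.
have [k _] := infinite_setN0 hK.
have [g0 _] : [set: G] !=set0.
  apply/set0P/negP => /eqP G0; move: hKG; rewrite G0 => /card_le0P K0.
  by have : [set: K] k by []; rewrite K0.
have [le [le_xx le_tr le_anti le_tot le_wf]] := exists_well_order G.
have [|m0 _ m0_min] := le_wf [set: G]; first by exists g0.
have m0_le x : le m0 x by apply: m0_min.
exact: (flip_limsup_not_BFPP _ _ _ _ le_xx le_tr le_anti le_tot le_wf m0_le _ hK hGK).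
Qed.
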